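(* Let $X$ be a Banach space, $f:X\to\mathbb{R}\cup\{+\infty\}$ lower semicontinuous and $\bar x\in[f\le0]$. Let $\tau>0$, $\delta\in(0,\infty]$ and $q\in(0,1]$. Suppose that either $X$ is Asplund or $f$ is convex, and that $d(x,[f\le0])^{q-1}d(0,\partial f(x))^q\ge\tau$ for all $x\in B_\delta(\bar x)\cap[f>0]$ with $f^q(x)<\tau\, d(x,[f\le0])$. Adopt the convention $0^0=1$. Then the condition (A) $\alpha^q(1-\alpha)^{1-q}\tau\, d(x,[f\le0])\le f_+^q(x)$ for all $\alpha\in(0,1)$ and $x\in B_{\delta/(1+\alpha)}(\bar x)$ is equivalent to the condition (B) $\alpha^q(1-\alpha)^{1-q}\tau\, d(x,[f\le0])\le f_+^q(x)$ for all $\alpha\in(0,q]$ and $x\in B_{\delta/(1+\alpha)}(\bar x)$. Condition (B) implies (C) $q^q(1-q)^{1-q}\tau\, d(x,[f\le0])\le f_+^q(x)$ for all $x\in B_{\delta/(1+q)}(\bar x)$. Moreover, condition (C) is equivalent to condition (B) with the neighbourhood $B_{\delta/(1+\alpha)}(\bar x)$ replaced by $B_{\delta/(1+q)}(\bar x)$.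
   Context: $[f\le0]=\{x: f(x)\le0\}$, $[f>0]=\{x:f(x)>0\}$, $f_+(x)=\max\{f(x),0\}$; for $f(x)\ge0$, $f^q(x):=[f(x)]^q$, $f_+^q(x)=[f_+(x)]^q$. $B_\delta(x)$ is the open ball of radius $\delta$ centered at $x$ ($B_\infty(x)=X$). $d(x,A)=\inf_{a\in A}\|x-a\|$, $d(x,\emptyset)=+\infty$. $\partial f(x)$ is the Fréchet subdifferential: $\{x^*\in X^*:\liminf_{y\to x}\frac{f(y)-f(x)-\langle x^*,y-x\rangle}{\|y-x\|}\ge0\}$ if $f(x)<+\infty$, $\emptyset$ otherwise (equal to the convex subdifferential for convex $f$); $d(0,\partial f(x))=\inf\{\|x^*\|:x^*\in\partial f(x)\}$ ($+\infty$ if empty). A Banach space is Asplund if every continuous convex function on an open convex subset is Fréchet differentiable on a dense subset. *)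

From HB Require Import structures.
From mathcomp Require Import all_boot all_order all_algebra.
From mathcomp Require Import all_classical all_reals all_analysis.
Set Implicit Arguments. Unset Strict Implicit. Unset Printing Implicit Defensive.
Import Order.TTheory GRing.Theory Num.Theory.
Import numFieldNormedType.Exports.
Local Open Scope classical_set_scope.
Local Open Scope ring_scope.

Section Defs.
Context {R : realType} {X : normedModType R}.

Definition cvx_set (U : set X) :=
  forall u v (t : R), U u -> U v -> 0 <= t <= 1 -> U (t *: u + (1 - t) *: v).

Definition cvx_fun_on (U : set X) (g : X -> R) :=
  forall u v (t : R), U u -> U v -> 0 <= t <= 1 ->
    g (t *: u + (1 - t) *: v) <= t * g u + (1 - t) * g v.

Definition Asplund :=
  forall (U : set X) (g : X -> R), open U -> cvx_set U ->
    {within U, continuous g} -> cvx_fun_on U g ->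
    exists D : set X, D `<=` U /\ U `<=` closure D /\
      forall x, D x -> differentiable g x.

Definition ecvx (f : X -> \bar R) :=
  forall (u v : X) (t : R), 0 < t < 1 ->
    (f (t *: u + (1 - t) *: v)%R <= t%:E * f u + (1 - t)%:E * f v)%E.

Definition is_dual (x' : X -> R) :=
  (forall (a : R) u v, x' (a *: u + v) = a * x' u + x' v) /\ continuous x'.

Definition dual_norm (x' : X -> R) : \bar R :=
  ereal_sup [set (`| x' u |)%:E | u in [set u : X | `|u| <= 1]].

(* Frechet subdifferential: x' in X^* with
   liminf_{y -> x} (f y - f x - <x', y - x>)/||y - x|| >= 0, and f x finite
   (empty when f x = +oo). The liminf condition is written out. *)
Definition frechet_subdiff (f : X -> \bar R) (x : X) : set (X -> R) :=
  [set x' | is_dual x' /\ f x \is a fin_num /\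
     forall e : R, 0 < e -> exists2 d : R, 0 < d &
       forall y, 0 < `|y - x| < d ->
         ((fine (f x) + x' (y - x) - e * `|y - x|)%:E <= f y)%E].

(* d(0, \partial f(x)) (= +oo if the subdifferential is empty) *)
Definition dist0_subdiff (f : X -> \bar R) (x : X) : \bar R :=
  ereal_inf [set dual_norm x' | x' in frechet_subdiff f x].

Definition dist (x : X) (A : set X) : \bar R :=
  ereal_inf [set (`| x - a |)%:E | a in A].

Definition eball (c : X) (r : \bar R) : set X := [set x | ((`| x - c |)%:E < r)%E].

Definition sublevel0 (f : X -> \bar R) : set X := [set x | (f x <= 0)%E].

Definition fplusq (f : X -> \bar R) (q : R) (x : X) : \bar R :=
  poweR (Order.max (f x) 0%E) q.

(* the inequality  alpha^q (1-alpha)^(1-q) tau d(x,[f<=0]) <= f_+^q(x)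
   (powR 0 0 = 1, i.e. convention 0^0 = 1) *)
Definition ineq (f : X -> \bar R) (q tau alpha : R) (x : X) : Prop :=
  (((powR alpha q * powR (1 - alpha) (1 - q) * tau)%:E * dist x (sublevel0 f)
     <= fplusq f q x)%E).

End Defs.

(* The coefficient a^q (1-a)^(1-q) of
   the inequality is maximal at a = q (binary Gibbs inequality), and the balls
   B_{delta/(1+a)}(xbar) shrink as a grows; this gives everything except the
   boundary case a = q = 1 of (A) => (B), which follows from (A) by letting
   a tend to 1. *)

From HB Require Import structures.
From mathcomp Require Import all_boot all_order all_algebra.
From mathcomp Require Import all_classical all_reals all_analysis.
From mathcomp Require Import ring lra.
Set Implicit Arguments. Unset Strict Implicit.
Import Order.TTheory GRing.Theory Num.Theory.
Import numFieldNormedType.Exports.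
Local Open Scope classical_set_scope.
Local Open Scope ring_scope.

Section BernoulliLikelihood.
Context {R : realType}.
Implicit Types q a x : R.

Lemma ln_le_subr1 x : 0 < x -> ln x <= x - 1.
Proof.
move=> x_gt0; have := @le_ln1Dx R (x - 1).
by rewrite subrKC; apply; rewrite ltrBrDl subrr.
Qed.

Lemma binary_gibbs q a : 0 < q < 1 -> 0 < a < 1 ->
  q * ln a + (1 - q) * ln (1 - a) <= q * ln q + (1 - q) * ln (1 - q).
Proof.
move=> /andP[q_gt0 q_lt1] /andP[a_gt0 a_lt1].
have q'_gt0 : 0 < 1 - q by rewrite subr_gt0.
have a'_gt0 : 0 < 1 - a by rewrite subr_gt0.
have gibbs_a : q * (ln a - ln q) <= a - q.
  have -> : a - q = q * (a / q - 1) by field; rewrite gt_eqF.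
  by rewrite -ln_div ?posrE // ler_pM2l // ln_le_subr1 ?divr_gt0.
have gibbs_a' : (1 - q) * (ln (1 - a) - ln (1 - q)) <= q - a.
  have -> : q - a = (1 - q) * ((1 - a) / (1 - q) - 1) by field; rewrite gt_eqF.
  by rewrite -ln_div ?posrE // ler_pM2l // ln_le_subr1 ?divr_gt0.
rewrite -subr_ge0; have := lerD gibbs_a gibbs_a'; lra.
Qed.

(* The likelihood of the Bernoulli parameter [a] given the success
   frequency [q]. *)
Definition bern_lik q a := a `^ q * (1 - a) `^ (1 - q).

Lemma bern_lik_le q a : 0 < q <= 1 -> 0 <= a <= 1 -> bern_lik q a <= bern_lik q q.
Proof.
move=> /andP[q_gt0 q_le1] /andP[a_ge0 a_le1]; rewrite /bern_lik.
have [->|q_neq1] := eqVneq q 1.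
  by rewrite subrr !powRr0 !powRr1 ?mulr1.
have q_lt1 : q < 1 by rewrite lt_neqAle q_neq1.
have rhs_ge0 : 0 <= q `^ q * (1 - q) `^ (1 - q) by rewrite mulr_ge0 ?powR_ge0.
have [->|a_neq0] := eqVneq a 0; first by rewrite powR0 ?mul0r ?gt_eqF.
have [->|a_neq1] := eqVneq a 1; first by rewrite subrr powR0 ?mulr0 // subr_eq0 eq_sym.
have a_gt0 : 0 < a by rewrite lt0r a_neq0.
have a_lt1 : a < 1 by rewrite lt_neqAle a_neq1.
rewrite /powR !gt_eqF ?subr_gt0 // -!expRD ler_expR.
by rewrite binary_gibbs ?q_gt0 ?q_lt1 ?a_gt0 ?a_lt1.
Qed.

End BernoulliLikelihood.

Section Inequality.
Context {R : realType} {X : normedModType R}.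
Implicit Types (f : X -> \bar R) (x : X).

Lemma dist_ge0 x (A : set X) : (0 <= dist x A)%E.
Proof. by apply: le_ereal_inf_tmp => _ [a _ <-]; rewrite lee_fin. Qed.

Lemma ineq_lik_mono f (q tau a b : R) x : 0 <= tau ->
  bern_lik q a <= bern_lik q b -> ineq f q tau b x -> ineq f q tau a x.
Proof.
move=> tau_ge0 lik_ab; apply: le_trans.
by rewrite lee_wpmul2r ?dist_ge0 // lee_fin ler_wpM2r.
Qed.

Lemma ineq1_lim1 f (tau : R) x : 0 <= tau ->
  (forall a : R, 0 < a < 1 -> ineq f 1 tau a x) -> ineq f 1 tau 1 x.
Proof.
move=> tau_ge0 ineq_lt1; rewrite /ineq subrr powRr0 powRr1 // mulr1 mul1r.
apply/lee_mul01Pr; first by rewrite mule_ge0 ?dist_ge0.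
move=> a /andP[a_gt0 a_lt1]; rewrite muleA -EFinM.
have := ineq_lt1 a; rewrite a_gt0 a_lt1 => /(_ isT).
by rewrite /ineq subrr powRr0 powRr1 ?mulr1 // ltW.
Qed.

Lemma eball_shrink (c : X) (delta : \bar R) (a b : R) :
  (0 <= delta)%E -> 0 <= a <= b ->
  eball c (delta * ((1 + b)^-1)%:E)%E `<=` eball c (delta * ((1 + a)^-1)%:E)%E.
Proof.
move=> delta_ge0 /andP[a_ge0 a_le_b] x /lt_le_trans; apply.
by rewrite lee_wpmul2l // lee_fin lef_pV2 ?posrE ?lerD2l //; lra.
Qed.

End Inequality.

Theorem proposition3p13 (R : realType) (X : completeNormedModType R)
  (f : X -> \bar R) (xbar : X) (tau : R) (delta : \bar R) (q : R) :
  (forall x, f x != -oo%E) ->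
  lower_semicontinuous f ->
  (f xbar <= 0)%E ->
  0 < tau -> (0 < delta)%E -> 0 < q <= 1 ->
  (@Asplund R X \/ ecvx f) ->
  (forall x, eball xbar delta x -> (0 < f x)%E ->
     (poweR (f x) q < tau%:E * dist x (sublevel0 f))%E ->
     (tau%:E <= poweR (dist x (sublevel0 f)) (q - 1) * poweR (dist0_subdiff f x) q)%E) ->
  let condA := forall alpha : R, 0 < alpha < 1 -> forall x,
      eball xbar (delta * ((1 + alpha)^-1)%:E)%E x -> ineq f q tau alpha x in
  let condB := forall alpha : R, 0 < alpha <= q -> forall x,
      eball xbar (delta * ((1 + alpha)^-1)%:E)%E x -> ineq f q tau alpha x in
  let condC := forall x,
      eball xbar (delta * ((1 + q)^-1)%:E)%E x -> ineq f q tau q x in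
  let condB' := forall alpha : R, 0 < alpha <= q -> forall x,
      eball xbar (delta * ((1 + q)^-1)%:E)%E x -> ineq f q tau alpha x in
  (condA <-> condB) /\ (condB -> condC) /\ (condC <-> condB').
Proof.
move=> _ _ _ /ltW tau_ge0 /ltW delta_ge0 q01 _ _ condA condB condC condB'.
have /andP[q_gt0 q_le1] := q01.
have lik_le_q a : 0 <= a <= 1 -> bern_lik q a <= bern_lik q q := bern_lik_le q01.
have condB_q : condB -> condC by move=> hB x; apply: hB; rewrite q_gt0 lexx.
split; [split|split=> //; split=> [hC a /andP[a_gt0 a_le_q] x Bx|hB' x]].
- move=> hA a /andP[a_gt0 a_le_q] x Bx.
  have [a_lt1|a_ge1] := ltP a 1; first by apply: hA; rewrite ?a_gt0.
  have a1 : a = 1 by apply/le_anti; rewrite a_ge1 (le_trans a_le_q).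
  have q1 : q = 1 by apply/le_anti; rewrite q_le1 -a1.
  subst a q; apply: ineq1_lim1 => // b /andP[b_gt0 b_lt1].
  apply: hA; first by rewrite b_gt0 b_lt1.
  by apply: (eball_shrink delta_ge0 _ Bx); rewrite !ltW.
- move=> hB a /andP[a_gt0 a_lt1] x Bx.
  have [a_le_q|q_lt_a] := leP a q; first by apply: hB; rewrite ?a_gt0.
  apply: (ineq_lik_mono tau_ge0 (lik_le_q a _)); first by rewrite !ltW.
  by apply: (condB_q hB x (eball_shrink delta_ge0 _ Bx)); rewrite !ltW.
- apply: (ineq_lik_mono tau_ge0 (lik_le_q a _)) (hC x Bx).
  by rewrite ltW // (le_trans a_le_q).
- by apply: hB'; rewrite q_gt0 lexx.
Qed.
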